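(* If the second-order Lagrangian $L$ is homogeneous, then its Hilbert forms satisfy $i^i_l\vartheta^m=0$, $i^{ij}_l\vartheta^m=0$ and $i^{ijk}_l\vartheta^m=0$ for all indices $i,j,k,l,m\in\{1,2\}$.
   Context: Let $E$ be a smooth manifold of dimension $n$ with local coordinates $(u^\alpha)$. For $k\ge 1$, $\mathcal F^k_{(2)}E$ denotes the bundle of $k$-th order 2-frames in $E$ (regular $k$-th order 2-velocities, i.e. $k$-jets at $0$ of maps $\mathbb R^2\to E$ of rank 2 at $0$), with induced coordinates $u^\alpha_{i_1\cdots i_s}$ ($0\le s\le k$, indices in $\{1,2\}$, totally symmetric in the subscripts). Pull-backs along the projections $\mathcal F^l_{(2)}E\to\mathcal F^k_{(2)}E$ are omitted. $\#(i_1\cdots i_s)$ denotes the number of distinct rearrangements of $(i_1,\dots,i_s)$; repeated indices in $\{1,2\}$ are summed. The total derivatives are the vector fields along $\mathcal F^{k+1}_{(2)}E\to\mathcal F^k_{(2)}E$ given by $\mathbf T_i=\sum_{s=0}^k \frac{1}{\#(i_1\cdots i_s)}u^\alpha_{i i_1\cdots i_s}\,\partial/\partial u^\alpha_{i_1\cdots i_s}$, and the vertical endomorphisms are the type $(1,1)$ tensor fields on $\mathcal F^{k+1}_{(2)}E$ given by $S^j=\sum_{s=0}^k \frac{s+1}{\#(i_1\cdots i_s)}\,\partial/\partial u^\alpha_{j i_1\cdots i_s}\otimes du^\alpha_{i_1\cdots i_s}$. The $S^i$ commute and $S^{i_1\cdots i_s}$ denotes their composite. On forms, $S^i$ acts as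 the degree-zero derivation $(S^i\omega)(X_1,\dots,X_r)=\sum_a \omega(X_1,\dots,S^iX_a,\dots,X_r)$ (zero on functions). The fundamental vector fields are $\Delta^{i_1\cdots i_s}_i=S^{i_1\cdots i_s}(\mathbf T_i)$, well-defined vector fields on $\mathcal F^{k+1}_{(2)}E$. Contraction with $\mathbf T_i$ and with $\Delta^{i_1\cdots i_s}_i$ is denoted $i_i$ and $i^{i_1\cdots i_s}_i$; the corresponding Lie derivatives are $d_i=d\,i_i+i_i\,d$ and $d^{i_1\cdots i_s}_i=d\,i^{i_1\cdots i_s}_i+i^{i_1\cdots i_s}_i d$. The $d_i$ commute and $d_{j_1\cdots j_s}$ denotes their composite. A second-order Lagrangian is a smooth function $L$ on (an open subset of) $\mathcal F^2_{(2)}E$; it is homogeneous if $d^i_jL=\delta^i_jL$ and $d^{ik}_jL=0$ for all $i,j,k$. Its Hilbert forms are the 1-forms $\vartheta^i=(S^i-\tfrac12 d_jS^{ji})\,dL$ on $\mathcal F^3_{(2)}E$. *)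

From HB Require Import structures.
From mathcomp Require Import all_boot all_order all_algebra.
From mathcomp Require Import all_classical all_reals all_analysis.
Set Implicit Arguments. Unset Strict Implicit. Unset Printing Implicit Defensive.
Import Order.TTheory GRing.Theory Num.Theory.
Import numFieldNormedType.Exports.
Local Open Scope classical_set_scope.
Local Open Scope ring_scope.

(* Symmetric multi-indices over {1,2} of order <= 3 are encoded by columns
   c : 'I_10, c <-> (p,q) = (number of 1's, number of 2's), listed by level:
   ()  (1) (2)  (11) (12) (22)  (111) (112) (122) (222).
   Columns 0..5 are exactly the multi-indices of order <= 2. *)
Definition pq_tab : seq (nat * nat) :=
  [:: (0,0); (1,0); (0,1); (2,0); (1,1); (0,2); (3,0); (2,1); (1,2); (0,3)]%N.
Definition pq (c : 'I_10) : nat * nat := nth (0,0)%N pq_tab c.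
Definition lev (c : 'I_10) : nat := ((pq c).1 + (pq c).2)%N.
(* column of the multi-index with p ones and q twos (meaningful for p+q <= 3) *)
Definition colof (p q : nat) : 'I_10 := inord ((p + q) * (p + q).+1 %/ 2 + q)%N.
(* the multi-index j I (index j in {1,2} encoded as j : 'I_2, 0 <-> 1, 1 <-> 2) *)
Definition shift (j : 'I_2) (c : 'I_10) : 'I_10 :=
  colof ((pq c).1 + (j == 0 :> nat))%N ((pq c).2 + (j == 1 :> nat))%N.

Section Frames.
Variables (R : realType) (n : nat).

(* points of (a chart of) F^3_(2) E: coordinates x a c = u^a_I, I <-> c *)
Definition F3 := 'M[R]_(n, 10).
(* points of (a chart of) F^2_(2) E *)
Definition F2 := 'M[R]_(n, 6).

Definition proj32 (x : F3) : F2 :=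
  \matrix_(a, c) x a (widen_ord (isT : (6 <= 10)%N) c).

Definition partial m k (a : 'I_m) (c : 'I_k) (f : 'M[R]_(m, k) -> R)
  (x : 'M[R]_(m, k)) : R := 'D_(delta_mx a c) f x.

Fixpoint iterD (cs : seq ('I_n * 'I_6)) (f : F2 -> R) : F2 -> R :=
  match cs with
  | [::] => f
  | c :: cs' => fun y => partial c.1 c.2 (iterD cs' f) y
  end.
Definition smooth_on (W : set F2) (f : F2 -> R) : Prop :=
  forall cs y, W y -> differentiable (iterD cs f) y.

Definition regular2 (y : F2) : Prop :=
  forall s t : R, (forall a : 'I_n, s * y a (inord 1) + t * y a (inord 2) = 0) ->
    s = 0 /\ t = 0.

(* Vector fields and 1-forms on (the chart of) F^3 are given by their
   components w.r.t. d/du^a_I, resp. du^a_I. *)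
Definition dfun (f : F3 -> R) : F3 -> F3 :=
  fun x => \matrix_(a, c) partial a c f x.
Definition contr (V w : F3 -> F3) : F3 -> R :=
  fun x => \sum_(a < n) \sum_(c < 10) V x a c * w x a c.
(* i_V (d w) *)
Definition contrd (V w : F3 -> F3) : F3 -> F3 :=
  fun x => \matrix_(a, c) \sum_(b < n) \sum_(e < 10)
     V x b e * (partial b e (fun y => w y a c) x - partial a c (fun y => w y b e) x).
(* Lie derivative of a 1-form: d i_V + i_V d *)
Definition lie (V w : F3 -> F3) : F3 -> F3 :=
  fun x => dfun (contr V w) x + contrd V w x.
Definition lieF (V : F3 -> F3) (f : F3 -> R) : F3 -> R := contr V (dfun f).

(* total derivative T_i along F^3 -> F^2 *)
Definition Tf (i : 'I_2) : F3 -> F3 :=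
  fun x => \matrix_(a, c) if (lev c <= 2)%N then x a (shift i c) else 0.
(* vertical endomorphism S^j on F^3 acting on vectors *)
Definition Svec (j : 'I_2) (V : F3 -> F3) : F3 -> F3 :=
  fun x => \matrix_(a, c') \sum_(c < 10 | (lev c <= 2)%N && (shift j c == c'))
      (lev c).+1%:R * V x a c.
(* S^j acting on 1-forms: (S^j w)(X) = w(S^j X) *)
Definition Sform (j : 'I_2) (w : F3 -> F3) : F3 -> F3 :=
  fun x => \matrix_(a, c) if (lev c <= 2)%N then (lev c).+1%:R * w x a (shift j c) else 0.

Definition Delta1 (i l : 'I_2) := Svec i (Tf l).
Definition Delta2 (i j l : 'I_2) := Svec i (Svec j (Tf l)).
Definition Delta3 (i j k l : 'I_2) := Svec i (Svec j (Svec k (Tf l))).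

Definition hilbert (L : F2 -> R) (m : 'I_2) : F3 -> F3 :=
  let dL := dfun (L \o proj32) in
  fun x => Sform m dL x - 2^-1 *: \sum_(j < 2) lie (Tf j) (Sform j (Sform m dL)) x.

Definition homogeneous (W : set F2) (L : F2 -> R) : Prop :=
  forall x : F3, W (proj32 x) -> forall i j k : 'I_2,
    lieF (Delta1 i j) (L \o proj32) x = (i == j)%:R * L (proj32 x) /\
    lieF (Delta2 i k j) (L \o proj32) x = 0.

End Frames.

From Pilot Require Import Defs.
From HB Require Import structures.
From mathcomp Require Import all_boot all_order all_algebra.
From mathcomp Require Import all_classical all_reals all_analysis.
From mathcomp Require Import ring.
Import Order.TTheory GRing.Theory Num.Theory.
Import numFieldNormedType.Exports.
Local Open Scope classical_set_scope.
Local Open Scope ring_scope.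

(** Since [L] only depends on
   coordinates of order [<= 2], [S^i S^m dL] only has components along
   [du^a], namely [2 dL/du^a_{mi}], and the Lie derivative in the correction
   term of [theta^m] only contributes [dL/du^a_{mj}] along [du^a_j].  Hence
   [S^i theta^m = 1/2 S^i S^m dL] and [S^j S^i theta^m = 0], so that
   [i^{ij}_l theta^m] and [i^{ijk}_l theta^m] vanish, while
   [i^i_l theta^m = 1/2 i_{T_l} S^i S^m dL = 1/2 d^{mi}_l L = 0]
   by homogeneity. *)

Set Implicit Arguments. Unset Strict Implicit.

Lemma sum_mul_indicator (T : pzRingType) k (g : 'I_k -> T) a (P : bool) :
  \sum_(b < k) g b * ((b == a) && P)%:R = g a * P%:R.
Proof.
rewrite (bigD1 a) //= eqxx big1 ?addr0 // => b ba.
by rewrite (negPf ba) mulr0.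
Qed.

Section Derivatives.
Variable R : realType.

Lemma derive_along_lines (V1 V2 : normedModType R) (f : V1 -> R) (g : V2 -> R)
    x v y w :
  (forall h : R, f (h *: v + x) = g (h *: w + y)) ->
  'D_v f x = 'D_w g y /\ (derivable f x v <-> derivable g y w).
Proof.
move=> fg.
have E : (fun h : R => h^-1 *: ((f \o shift x) (h *: v) - f x)) =
         (fun h : R => h^-1 *: ((g \o shift y) (h *: w) - g y)).
  apply/funext => h /=; rewrite /shift /= fg.
  by have := fg 0; rewrite !scale0r !add0r => ->.
by rewrite /derive /derivable E.
Qed.

Variable n : nat.

Lemma proj32_linear (h : R) (v x : F3 R n) :
  proj32 (h *: v + x) = h *: proj32 v + proj32 x.
Proof. by apply/matrixP => a c; rewrite !mxE. Qed.

Lemma derive_comp_proj32 (f : F2 R n -> R) (z v : F3 R n) :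
  'D_v (f \o @proj32 R n) z = 'D_(proj32 v) f (proj32 z) /\
  (derivable (f \o @proj32 R n) z v <-> derivable f (proj32 z) (proj32 v)).
Proof. by apply: derive_along_lines => h /=; rewrite proj32_linear. Qed.

Lemma partial_comp_proj32_ge6 (f : F2 R n -> R) a (c : 'I_10) z :
  (6 <= c)%N -> partial a c (f \o @proj32 R n) z = 0.
Proof.
move=> c_ge6; rewrite /partial (derive_comp_proj32 f z _).1.
suff -> : proj32 (delta_mx a c : F3 R n) = 0 by exact: derive0.
apply/matrixP => b e; rewrite !mxE; case: (b == a) => //=; case: eqP => // ec.
move: (ltn_ord e).
by rewrite -[nat_of_ord e]/(val (widen_ord (isT : (6 <= 10)%N) e)) ec ltnNge c_ge6.
Qed.

Lemma partial_comp_proj32_lt6 (f : F2 R n -> R) a (c : 'I_10) (c_lt6 : (c < 6)%N) :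
  partial a c (f \o @proj32 R n) = partial a (Ordinal c_lt6) f \o @proj32 R n.
Proof.
apply/funext => z; rewrite /partial (derive_comp_proj32 f z _).1 /=.
by congr ('D_ _ f _); apply/matrixP => b e; rewrite !mxE.
Qed.

Lemma partial_coord a c b e (y : F3 R n) :
  partial a c (fun z : F3 R n => z b e) y = ((b == a) && (e == c))%:R /\
  derivable (fun z : F3 R n => z b e) y (delta_mx a c).
Proof.
rewrite /partial; have [-> Dd] : 'D_(delta_mx a c) (fun z : F3 R n => z b e) y =
    'D_(delta_mx a c b e) (@id R^o) (y b e) /\
  (derivable (fun z : F3 R n => z b e) y (delta_mx a c) <->
    derivable (@id R^o) (y b e) (delta_mx a c b e)).
  by apply: derive_along_lines => h; rewrite !mxE.
by split; [rewrite derive_id mxE | apply/Dd; exact: derivable_id].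
Qed.

End Derivatives.

Local Notation shift := Defs.shift.

Definition col1 (j : 'I_2) : 'I_10 := shift j ord0.

Lemma lev_shift (i : 'I_2) (c : 'I_10) :
  (lev c <= 2)%N -> lev (shift i c) = (lev c).+1.
Proof.
case: i => [[|[|//]]] ?; case: c => [[|[|[|[|[|[|[|[|[|[|//]]]]]]]]]] ?].
all: rewrite {1}/lev /pq /= => H //.
all: by rewrite /lev /pq /Defs.shift /colof /= inordK.
Qed.

Lemma lev_eq0 (c : 'I_10) : (lev c == 0)%N = (c == ord0).
Proof. by case: c => [[|[|[|[|[|[|[|[|[|[|//]]]]]]]]]] ?]. Qed.

Lemma lev_le2 (c : 'I_10) : (lev c <= 2)%N = (c < 6)%N.
Proof. by case: c => [[|[|[|[|[|[|[|[|[|[|//]]]]]]]]]] ?]. Qed.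

Lemma lev_col1 (j : 'I_2) : lev (col1 j) = 1%N.
Proof. by rewrite lev_shift. Qed.

Lemma eq_col1 (i j : 'I_2) : (col1 i == col1 j) = (i == j).
Proof.
by case: i => [[|[|//]]] ?; case: j => [[|[|//]]] ?;
  rewrite /col1 /Defs.shift /colof -val_eqE /= !inordK.
Qed.

Lemma lev_shift_col1 (m j : 'I_2) : lev (shift m (col1 j)) = 2%N.
Proof. by rewrite lev_shift lev_col1. Qed.

Lemma shift_col1_lt6 (m j : 'I_2) : (shift m (col1 j) < 6)%N.
Proof. by rewrite -lev_le2 lev_shift_col1. Qed.

Section Operators.
Variables (R : realType) (n : nat).
Implicit Types (V w : F3 R n -> F3 R n) (x : F3 R n).

Lemma contr_Svec i V w x : contr (Svec i V) w x = contr V (Sform i w) x.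
Proof.
rewrite /contr; apply: eq_bigr => a _.
transitivity (\sum_(c' < 10) \sum_(c < 10) (if (lev c <= 2)%N && (shift i c == c')
    then (lev c).+1%:R * V x a c * w x a c' else 0)).
  apply: eq_bigr => c' _; rewrite /Svec mxE big_distrl /= big_mkcond /=.
  by apply: eq_bigr => c _; case: ifP; rewrite ?mul0r.
rewrite exchange_big /=; apply: eq_bigr => c _; rewrite /Sform mxE.
case: ifP => c_le2 /=; last by rewrite big1 ?mulr0.
rewrite -big_mkcond /= (big_pred1 (shift i c)) => [|c'] /=; last by rewrite eq_sym.
by rewrite mulrA [V x a c * _]mulrC.
Qed.

Lemma contr_scale_at V w1 w2 x (k : R) :
  w1 x = k *: w2 x -> contr V w1 x = k * contr V w2 x.
Proof.
move=> w12; rewrite /contr mulr_sumr; apply: eq_bigr => a _.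
rewrite mulr_sumr; apply: eq_bigr => c _; rewrite w12 mxE; ring.
Qed.

Lemma Sform_scale_at j w1 w2 x (k : R) :
  w1 x = k *: w2 x -> Sform j w1 x = k *: Sform j w2 x.
Proof.
move=> w12; apply/matrixP => a c; rewrite !mxE w12 mxE.
by case: ifP => _; rewrite ?mulr0 // mulrCA.
Qed.

Lemma contr_eq0_at V w x : w x = 0 -> contr V w x = 0.
Proof.
move=> w0; rewrite /contr big1 // => a _; rewrite big1 // => c _.
by rewrite w0 mxE mulr0.
Qed.

Lemma Sform_eq0_at j w x : w x = 0 -> Sform j w x = 0.
Proof.
by move=> w0; apply/matrixP => a c; rewrite !mxE w0 mxE; case: ifP; rewrite ?mulr0.
Qed.

Lemma Tf_ord0 l x a : Tf l x a ord0 = x a (col1 l).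
Proof. by rewrite /Tf mxE. Qed.

Lemma contr_Tf_ord0 l w x (g : 'I_n -> R) :
  (forall a c, w x a c = (c == ord0)%:R * g a) ->
  contr (Tf l) w x = \sum_(a < n) x a (col1 l) * g a.
Proof.
move=> w0; rewrite /contr; apply: eq_bigr => a _.
rewrite (bigD1 ord0) //= big1 => [|e e0]; last by rewrite w0 (negPf e0) mul0r mulr0.
by rewrite w0 eqxx Tf_ord0 mul1r addr0.
Qed.

End Operators.

Section HilbertForms.
Variables (R : realType) (n : nat) (L : F2 R n -> R).
Local Notation F := (L \o @proj32 R n).
Local Notation dL := (dfun F).
Local Notation SSdL m j := (Sform j (Sform m dL)).
Local Notation G m j := (fun b => partial b (shift m (col1 j)) F).

Lemma SSdL_entry m j z a c : SSdL m j z a c = (c == ord0)%:R * (2 * G m j a z).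
Proof.
rewrite /Sform /dfun /= !mxE.
have [->|c0] := eqVneq c ord0.
  by rewrite /= lev_col1 /= ?mxE -/(col1 j) (_ : lev ord0 = 0%N) // mul1r.
rewrite mul0r; case: (leqP (lev c) 2) => // c_le2.
have c_ge1 : (0 < lev c)%N by rewrite lt0n lev_eq0.
rewrite lev_shift //; case: (leqP (lev c) 1) => c_le1; last first.
  by rewrite (_ : lev c = 2%N) /= ?mulr0 //; apply/eqP; rewrite eqn_leq c_le2 c_le1.
have c1 : lev c = 1%N by apply/eqP; rewrite eqn_leq c_le1 c_ge1.
have lev_jc : lev (shift j c) = 2%N by rewrite lev_shift c1.
rewrite c1 /= ?mxE partial_comp_proj32_ge6 ?mulr0 //.
by rewrite leqNgt -lev_le2 lev_shift lev_jc.
Qed.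

Lemma SSSdL_eq0 m i j z : Sform j (SSdL m i) z = 0.
Proof.
apply/matrixP => a c; rewrite mxE [RHS]mxE; case: ifP => // c_le2.
by rewrite SSdL_entry -lev_eq0 lev_shift // mul0r mulr0.
Qed.

Lemma contr_Tf_SSdL m j :
  contr (Tf j) (SSdL m j) =
  \sum_(b < n) ((fun z : F3 R n => z b (col1 j)) * (2 \*o G m j b)).
Proof.
apply/funext => z; rewrite fct_sumE /=.
by apply: contr_Tf_ord0 => a c; exact: SSdL_entry.
Qed.

Variable y : F3 R n.
Hypothesis dL_diff : forall b (c : 'I_6), differentiable (partial b c L) (proj32 y).

Lemma derivable_G m j b v : derivable (G m j b) y v.
Proof.
rewrite /= (partial_comp_proj32_lt6 L b (shift_col1_lt6 m j)).
by apply/(derive_comp_proj32 _ _ _).2; exact: diff_derivable.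
Qed.

Lemma partial_contr_Tf_SSdL m j a c :
  partial a c (contr (Tf j) (SSdL m j)) y =
  \sum_(b < n) y b (col1 j) * (2 * partial a c (G m j b) y) +
  (col1 j == c)%:R * (2 * G m j a y).
Proof.
have dGj (b : 'I_n) : derivable (G m j b) y (delta_mx a c) by exact: derivable_G.
have d2Gj (b : 'I_n) : derivable (2 \*o G m j b) y (delta_mx a c).
  by apply: derivableM; [exact: derivable_cst | exact: dGj].
have D_term (b : 'I_n) : 'D_(delta_mx a c)
    ((fun z : F3 R n => z b (col1 j)) * (2 \*o G m j b)) y =
  y b (col1 j) * (2 * partial a c (G m j b) y) +
  2 * G m j b y * ((b == a) && (col1 j == c))%:R.
  rewrite deriveM; [|exact: (partial_coord a c b (col1 j) y).2|exact: d2Gj].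
  rewrite deriveMl //; have := (partial_coord a c b (col1 j) y).1.
  by rewrite /partial => ->.
rewrite contr_Tf_SSdL /partial derive_sum => [|b]; last first.
  by apply: derivableM; [exact: (partial_coord a c b (col1 j) y).2 | exact: d2Gj].
rewrite (eq_bigr _ (fun b _ => D_term b)) big_split /= sum_mul_indicator.
by rewrite mulrC.
Qed.

Lemma partial_SSdL_entry m j a c b e :
  partial a c (fun z => SSdL m j z b e) y =
  (e == ord0)%:R * (2 * partial a c (G m j b) y).
Proof.
have -> : (fun z => SSdL m j z b e) = ((e == ord0)%:R * 2) \*o G m j b.
  by apply/funext => z; rewrite SSdL_entry /= mulrA.
by rewrite /partial deriveMl ?mulrA //; exact: derivable_G.
Qed.

Lemma contrd_Tf_SSdL_entry m j a c : c != ord0 ->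
  contrd (Tf j) (SSdL m j) y a c =
  - \sum_(b < n) y b (col1 j) * (2 * partial a c (G m j b) y).
Proof.
move=> c0; rewrite /contrd mxE -sumrN; apply: eq_bigr => b _.
rewrite (bigD1 ord0) //= big1 => [|e e0].
  rewrite (partial_SSdL_entry m j b ord0 a c) (partial_SSdL_entry m j a c b ord0).
  rewrite (negPf c0) eqxx Tf_ord0.
  (* abstracting the derivatives keeps the rewrites below from unfolding them *)
  move: (y b (col1 j)) (partial b ord0 _ y) (partial a c _ y) => u P Q.
  by rewrite mul0r mul1r sub0r addr0 mulrN.
rewrite (partial_SSdL_entry m j b e a c) (partial_SSdL_entry m j a c b e).
rewrite (negPf c0) (negPf e0).
move: (Tf j y b e) (partial b e _ y) (partial a c _ y) => u P Q.
by rewrite !mul0r subrr mulr0.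
Qed.

Lemma lie_Tf_SSdL_entry m j a c : c != ord0 ->
  lie (Tf j) (SSdL m j) y a c = (c == col1 j)%:R * (2 * G m j a y).
Proof.
move=> c0; rewrite /lie mxE [dfun _ _ _ _]mxE partial_contr_Tf_SSdL.
by rewrite contrd_Tf_SSdL_entry // addrAC subrr add0r eq_sym.
Qed.

Lemma hilbert_entry m a c : c != ord0 ->
  hilbert L m y a c = Sform m dL y a c - \sum_(j < 2) (c == col1 j)%:R * G m j a y.
Proof.
move=> c0; rewrite /hilbert !mxE summxE mulr_sumr; congr (_ - _).
by apply: eq_bigr => j _; rewrite lie_Tf_SSdL_entry //; field.
Qed.

Lemma hilbert_col1 m p a : hilbert L m y a (col1 p) = G m p a y.
Proof.
have p0 : col1 p != ord0 by rewrite -lev_eq0 lev_col1.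
rewrite hilbert_entry // /Sform /dfun !mxE lev_col1 /=.
rewrite (bigD1 p) //= big1 => [|j jp]; last by rewrite eq_col1 eq_sym (negPf jp) mul0r.
by rewrite eqxx mul1r addr0 mulr_natl mulr2n addrK.
Qed.

Lemma hilbert_lev_ge2 m a c : (2 <= lev c)%N -> hilbert L m y a c = 0.
Proof.
move=> c_ge2; have c0 : c != ord0 by rewrite -lev_eq0 -lt0n (leq_trans _ c_ge2).
rewrite hilbert_entry // big1 => [|j _]; last first.
  by case: eqP c_ge2 => [->|_ _]; rewrite ?lev_col1 ?mul0r.
rewrite subr0 /Sform !mxE; case: ifP => // c_le2.
have c2 : lev c = 2%N by apply/eqP; rewrite eqn_leq c_le2 c_ge2.
by rewrite partial_comp_proj32_ge6 ?mulr0 // leqNgt -lev_le2 lev_shift c2.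
Qed.

Lemma Sform_hilbert m i : Sform i (hilbert L m) y = 2^-1 *: SSdL m i y.
Proof.
apply/matrixP => a c; rewrite [RHS]mxE SSdL_entry [LHS]mxE.
have [->|c0] := eqVneq c ord0.
  by rewrite (_ : lev ord0 = 0%N) //= -/(col1 i) hilbert_col1; field.
rewrite mul0r mulr0; case: ifP => // c_le2.
rewrite hilbert_lev_ge2 ?mulr0 // lev_shift //.
by move: c0; rewrite -lev_eq0; case: (lev c).
Qed.

End HilbertForms.

Theorem lemma2 (R : realType) (n : nat) (W : set (F2 R n)) (L : F2 R n -> R) :
  open W -> (forall y, W y -> regular2 y) -> smooth_on W L ->
  homogeneous W L ->
  forall x : F3 R n, W (proj32 x) -> forall i j k l m : 'I_2,
    contr (Delta1 i l) (hilbert L m) x = 0 /\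
    contr (Delta2 i j l) (hilbert L m) x = 0 /\
    contr (Delta3 i j k l) (hilbert L m) x = 0.
Proof.
move=> _ _ L_smooth L_hom x Wx i j k l m.
have dL_diff b (c : 'I_6) : differentiable (partial b c L) (proj32 x).
  exact: (L_smooth [:: (b, c)] _ Wx).
have S_theta := Sform_hilbert dL_diff m i.
have SS_theta : Sform j (Sform i (hilbert L m)) x = 0.
  by rewrite (Sform_scale_at _ S_theta) SSSdL_eq0 scaler0.
have [_ d2L] := L_hom x Wx m l i.
rewrite /Delta1 /Delta2 /Delta3 !contr_Svec; split; last split.
- rewrite (contr_scale_at _ S_theta).
  by move: d2L; rewrite /lieF /Delta2 !contr_Svec => ->; rewrite mulr0.
- exact: contr_eq0_at.
- by apply: contr_eq0_at; exact: Sform_eq0_at.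
Qed.
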